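(* Let $\beta:=\frac{1}{2\pi}\int_{-\infty}^{\infty}\prod_{k=1}^\infty\frac{k^{2\alpha}}{k^{2\alpha}+t^2}\,dt$, which is a finite positive constant depending only on $\alpha$. Then as $i,j\to\infty$, \[ \Pr[BINGO(i,j)]\sim\beta\,\bigl(i^{-\alpha}+j^{-\alpha}\bigr). \] In particular $\Pr[BINGO(n,n)]\sim 2\beta n^{-\alpha}$ as $n\to\infty$.
   Context: Fix $\alpha>1$. Let $(X_k,Y_k)_{k\ge2}$ be the Markov chain on $\mathbb N\times\mathbb N$ with $(X_2,Y_2)=(1,1)$ and, from state $(i,j)$, moving to $(i+1,j)$ with probability $i^\alpha/(i^\alpha+j^\alpha)$ and to $(i,j+1)$ with probability $j^\alpha/(i^\alpha+j^\alpha)$. $BINGO(i,j)$ is the event that the chain visits the state $(i,j)$. *)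

From Stdlib Require Import Reals Lra.
Open Scope R_scope.

Definition npow (n : nat) (a : R) : R := Rpower (INR n) a.

(* probability of stepping (i,j) -> (i+1,j) *)
Definition pstepX (alpha : R) (i j : nat) : R :=
  npow i alpha / (npow i alpha + npow j alpha).
Definition pstepY (alpha : R) (i j : nat) : R :=
  npow j alpha / (npow i alpha + npow j alpha).

(* bingo alpha i j = Pr[BINGO(i,j)] for i, j >= 1: the chain started at (1,1)
   moves by exactly one unit step each time, so it visits (i,j) iff it is at
   (i,j) at time i+j; hence the probability satisfies the forward recursion
   P(1,1) = 1,
   P(i,j) = P(i-1,j) * pstepX(i-1,j) + P(i,j-1) * pstepY(i,j-1),
   with P = 0 when a coordinate is 0. *)
Fixpoint bingo (alpha : R) (i : nat) : nat -> R :=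
  match i with
  | O => fun _ => 0
  | S i' =>
      fix bj (j : nat) : R :=
        match j with
        | O => 0
        | S j' =>
            match i', j' with
            | O, O => 1
            | _, _ => bingo alpha i' (S j') * pstepX alpha i' (S j')
                      + bj j' * pstepY alpha (S i') j'
            end
        end
  end.

Fixpoint partial_prod (alpha t : R) (n : nat) : R :=
  match n with
  | O => 1
  | S m => partial_prod alpha t m *
           (npow (S m) (2 * alpha) / (npow (S m) (2 * alpha) + t ^ 2))
  end.

Definition improper_integral_R (f : R -> R) (l : R) : Prop :=
  (forall a b, inhabited (Riemann_integrable f a b)) /\
  forall eps, 0 < eps -> exists M, forall a b, a <= - M -> M <= b ->
    exists pr : Riemann_integrable f a b, Rabs (RiemannInt pr - l) < eps.

Example bingo_11 (a : R) : bingo a 1 1 = 1. Proof. reflexivity. Qed.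

(* Let S_n be a sum of independent exponential variables of rates 1^alpha, ..., n^alpha and S'_n an
   independent copy of it (Rubin's embedding of the urn). Then
     P[BINGO(i,j)] = (i^-alpha + j^-alpha) * (density of S_i - S'_j at 0)
                   = (i^-alpha + j^-alpha) / (2 pi) * int Re phi_ij,
   where, writing u for sqrt(-1),
     phi_ij(t) = prod_(k<=i) k^alpha / (k^alpha - u t) * prod_(k<=j) k^alpha / (k^alpha + u t)
   is the characteristic function of S_i - S'_j. This identity is checked directly: both sides
   satisfy the forward recursion of the chain, by a partial fraction decomposition.
   Since sum_k k^-alpha < oo, phi_ij(t) tends to prod_k k^(2 alpha) / (k^(2 alpha) + t^2) as
   i, j -> oo, uniformly for bounded t, and all these functions are bounded by 1 / (1 + t^2);
   so the integrals converge to 2 pi beta. *)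

From Stdlib Require Import Reals Lra Lia.
From Coquelicot Require Import Coquelicot.
(* After Coquelicot, whose [AutoDerive] exports a constructor named [Forall]. *)
From Stdlib Require Import List.
Open Scope R_scope.

Lemma continuous_C (f : R -> C) x :
  continuous (fun t => Re (f t)) x -> continuous (fun t => Im (f t)) x -> continuous f x.
Proof.
  intros Hre Him.
  apply (continuous_ext (fun t => (Re (f t), Im (f t)) : C)).
  { intros t. destruct (f t); reflexivity. }
  apply (continuous_comp_2 _ _ (fun a b => (a, b) : C)); auto.
  apply (continuous_ext (fun z => z)); [intros [a b]; reflexivity | apply continuous_id].
Qed.

Lemma continuous_Re (f : R -> C) x : continuous f x -> continuous (fun t => Re (f t)) x.
Proof. intros Hf. apply continuous_comp; auto. destruct (f x). apply continuous_fst. Qed.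

Lemma continuous_Im (f : R -> C) x : continuous f x -> continuous (fun t => Im (f t)) x.
Proof. intros Hf. apply continuous_comp; auto. destruct (f x). apply continuous_snd. Qed.

Lemma continuous_Cmult (f g : R -> C) x :
  continuous f x -> continuous g x -> continuous (fun t => (f t * g t)%C) x.
Proof.
  intros Hf Hg.
  pose proof (continuous_Re f x Hf). pose proof (continuous_Im f x Hf).
  pose proof (continuous_Re g x Hg). pose proof (continuous_Im g x Hg).
  apply continuous_C; simpl.
  - apply (continuous_minus (fun t => Re (f t) * Re (g t)) (fun t => Im (f t) * Im (g t)));
      apply (continuous_mult (K := R_AbsRing)); auto.
  - apply (continuous_plus (fun t => Re (f t) * Im (g t)) (fun t => Im (f t) * Re (g t)));
      apply (continuous_mult (K := R_AbsRing)); auto.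
Qed.

Lemma Cmod_le_of_sqr (z : C) b : 0 <= b -> Re z ^ 2 + Im z ^ 2 <= b ^ 2 -> Cmod z <= b.
Proof.
  intros Hb Hz. unfold Cmod. rewrite <- (sqrt_pow2 b Hb). now apply sqrt_le_1_alt.
Qed.

(* [exp_cf c t] is [c / (c - i t)], the characteristic function of the exponential law of rate [c]. *)
Definition exp_cf (c t : R) : C := (c ^ 2 / (c ^ 2 + t ^ 2), c * t / (c ^ 2 + t ^ 2)).

Section ExpCf.

Variable c : R.
Hypothesis c_pos : 0 < c.

Let den_pos t : 0 < c ^ 2 + t ^ 2.
Proof. nra. Qed.

Lemma exp_cf_opp t : exp_cf c (- t) = Cconj (exp_cf c t).
Proof. pose proof (den_pos t). unfold exp_cf, Cconj; simpl. f_equal; field; lra. Qed.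

Lemma exp_cf_mul_opp t : (exp_cf c t * exp_cf c (- t))%C = RtoC (c ^ 2 / (c ^ 2 + t ^ 2)).
Proof.
  pose proof (den_pos t). unfold exp_cf, Cmult, RtoC; simpl. f_equal; field; lra.
Qed.

Lemma Cmod_exp_cf_le1 t : Cmod (exp_cf c t) <= 1.
Proof.
  pose proof (den_pos t). pose proof (pow2_ge_0 t). apply Cmod_le_of_sqr; [lra|].
  replace (Re (exp_cf c t) ^ 2 + Im (exp_cf c t) ^ 2) with (c ^ 2 / (c ^ 2 + t ^ 2))
    by (unfold exp_cf, Re, Im; cbn [fst snd]; field; lra).
  apply Rcomplements.Rle_div_l; lra.
Qed.

Lemma Cmod_exp_cf_sub1 t : Cmod (exp_cf c t - 1) <= Rabs t / c.
Proof.
  pose proof (den_pos t). apply Cmod_le_of_sqr.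
  { apply Rdiv_le_0_compat; [apply Rabs_pos | lra]. }
  replace (Re (exp_cf c t - 1) ^ 2 + Im (exp_cf c t - 1) ^ 2) with (t ^ 2 / (c ^ 2 + t ^ 2))
    by (unfold exp_cf, Cminus, Cplus, Copp, RtoC, Re, Im; cbn [fst snd]; field; lra).
  unfold Rdiv. rewrite Rpow_mult_distr, pow2_abs, pow_inv.
  apply Rmult_le_compat_l; [nra|]. apply Rinv_le_contravar; nra.
Qed.

Lemma continuous_exp_cf t : continuous (exp_cf c) t.
Proof.
  apply continuous_C; apply (ex_derive_continuous (V := R_NormedModule));
    unfold exp_cf; simpl; auto_derive; pose proof (den_pos t); lra.
Qed.

End ExpCf.

(* As [(a - i t) + (b + i t) = a + b], [1 / ((a - i t) (b + i t)) = (1 / (a - i t) + 1 / (b + i t)) / (a + b)]. *)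
Lemma exp_cf_mul_opp_partial_fraction a b t : 0 < a -> 0 < b ->
  (RtoC (/ a + / b) * (exp_cf a t * exp_cf b (- t)))%C
  = (RtoC (/ b) * exp_cf b (- t) + RtoC (/ a) * exp_cf a t)%C.
Proof.
  intros Ha Hb. assert (0 < a ^ 2 + t ^ 2) by nra. assert (0 < b ^ 2 + (- t) ^ 2) by nra.
  unfold exp_cf, Cmult, Cplus, RtoC; simpl. f_equal; field; lra.
Qed.

Lemma exp_cf_mul_partial_fraction a b t : 0 < a -> 0 < b -> a <> b ->
  (exp_cf a t * exp_cf b t)%C = (RtoC (/ (b - a)) * (RtoC b * exp_cf a t - RtoC a * exp_cf b t))%C.
Proof.
  intros Ha Hb Hab. assert (0 < a ^ 2 + t ^ 2) by nra. assert (0 < b ^ 2 + t ^ 2) by nra.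
  assert (b - a <> 0) by lra.
  unfold exp_cf, Cmult, Cminus, Cplus, Copp, RtoC; simpl. f_equal; field; lra.
Qed.

Fixpoint cf_prod (l : list R) (t : R) : C :=
  match l with
  | nil => 1
  | c :: l' => (exp_cf c t * cf_prod l' t)%C
  end.

Lemma cf_prod_opp l t : Forall (fun c => 0 < c) l -> cf_prod l (- t) = Cconj (cf_prod l t).
Proof.
  induction 1 as [|c l Hc _ IH]; simpl.
  - unfold Cconj, RtoC; simpl. f_equal; ring.
  - now rewrite IH, exp_cf_opp, Cmult_conj.
Qed.

Lemma Cmod_cf_prod_le1 l t : Forall (fun c => 0 < c) l -> Cmod (cf_prod l t) <= 1.
Proof.
  induction 1 as [|c l Hc _ IH]; simpl.
  - rewrite Cmod_1; lra.
  - rewrite Cmod_mult. pose proof (Cmod_exp_cf_le1 c Hc t).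
    pose proof (Cmod_ge_0 (exp_cf c t)). pose proof (Cmod_ge_0 (cf_prod l t)). nra.
Qed.

Lemma Cmod_cf_prod_le_In l c t : Forall (fun c => 0 < c) l -> In c l ->
  Cmod (cf_prod l t) <= Cmod (exp_cf c t).
Proof.
  induction 1 as [|d l Hd Hl IH]; [intros []|]. intros [<- | Hin]; simpl; rewrite Cmod_mult.
  - pose proof (Cmod_cf_prod_le1 l t Hl). pose proof (Cmod_ge_0 (exp_cf d t)). nra.
  - pose proof (Cmod_exp_cf_le1 d Hd t). pose proof (IH Hin).
    pose proof (Cmod_ge_0 (exp_cf d t)). pose proof (Cmod_ge_0 (cf_prod l t)). nra.
Qed.

Lemma continuous_cf_prod l t : Forall (fun c => 0 < c) l -> continuous (cf_prod l) t.
Proof.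
  induction 1 as [|c l Hc _ IH]; simpl.
  - apply continuous_const.
  - apply continuous_Cmult; [apply continuous_exp_cf|]; assumption.
Qed.

Lemma Un_cv_const k : Un_cv (fun _ => k) k.
Proof. intros e He. exists O. intros n _. unfold Rdist. rewrite Rminus_eq_0, Rabs_R0. lra. Qed.

Lemma Un_cv_ge_eventually u l a N : Un_cv u l -> (forall n, (N <= n)%nat -> a <= u n) -> a <= l.
Proof.
  intros Hu Ha. apply Rnot_lt_le. intros Hlt.
  destruct (Hu (a - l)) as [M HM]; [lra|].
  specialize (HM (max M N) ltac:(lia)). specialize (Ha (max M N) ltac:(lia)).
  unfold Rdist in HM. apply Rabs_def2 in HM. lra.
Qed.

Lemma Un_cv_le_eventually u l b N : Un_cv u l -> (forall n, (N <= n)%nat -> u n <= b) -> l <= b.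
Proof.
  intros Hu Hb. apply Ropp_le_cancel.
  apply (Un_cv_ge_eventually (fun n => - u n) (- l) (- b) N); [|intros n Hn; specialize (Hb n Hn); lra].
  apply (Un_cv_ext (fun n => -1 * u n)); [intros n; ring|].
  replace (- l) with (-1 * l) by ring. apply CV_mult; [apply Un_cv_const | exact Hu].
Qed.

Lemma Un_cv_abs_sub_le u l c B N : Un_cv u l -> (forall n, (N <= n)%nat -> Rabs (u n - c) <= B) ->
  Rabs (l - c) <= B.
Proof.
  intros Hu HB. apply Rabs_le. split; [cut (c - B <= l); [lra|] | cut (l <= c + B); [lra|]].
  - apply (Un_cv_ge_eventually u l _ N Hu). intros n Hn. specialize (HB n Hn).
    apply Rabs_le_between in HB. lra.
  - apply (Un_cv_le_eventually u l _ N Hu). intros n Hn. specialize (HB n Hn).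
    apply Rabs_le_between in HB. lra.
Qed.

Lemma INR_eventually_ge x : exists N, forall n, (N <= n)%nat -> x <= INR n.
Proof.
  destruct (INR_unbounded x) as [N HN]. exists N. intros n Hn. apply le_INR in Hn. lra.
Qed.

Lemma atan_tail eps : 0 < eps -> exists M, 0 < M /\ forall x, M <= x -> PI / 2 - atan x < eps.
Proof.
  intros Heps.
  destruct (derivable_continuous_pt _ _ (derivable_pt_atan 0) eps Heps) as [d [Hd Hatan]].
  assert (H2d : 0 < 2 / d) by (apply Rdiv_lt_0_compat; lra).
  exists (2 / d). split; [exact H2d|]. intros x Hx.
  assert (Hx0 : 0 < x) by lra.
  assert (Hinv : 0 < / x < d).
  { split; [now apply Rinv_0_lt_compat|].
    apply Rle_lt_trans with (/ (2 / d)); [apply Rinv_le_contravar; lra|].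
    rewrite Rinv_div. lra. }
  rewrite <- (atan_inv x Hx0).
  specialize (Hatan (/ x)). simpl in Hatan. unfold R_dist in Hatan.
  rewrite atan_0, !Rminus_0_r in Hatan.
  assert (Rabs (atan (/ x)) < eps).
  { apply Hatan. split; [split; [exact I | lra]|]. rewrite Rabs_pos_eq; lra. }
  apply Rabs_def2 in H. lra.
Qed.

Lemma is_RInt_inv_1_sqr a b : is_RInt (fun t => / (1 + t ^ 2)) a b (atan b - atan a).
Proof.
  apply (is_RInt_derive (V := R_CompleteNormedModule) atan).
  - intros t _. replace (t ^ 2) with (t²) by (unfold Rsqr; ring). apply is_derive_atan.
  - intros t _. apply (ex_derive_continuous (V := R_NormedModule)). auto_derive. nra.
Qed.

Lemma ex_RInt_continuous_R (f : R -> R) a b : (forall t, continuous f t) -> ex_RInt f a b.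
Proof. intros Hf. apply (ex_RInt_continuous (V := R_CompleteNormedModule)). auto. Qed.

Lemma RInt_le_superinterval (f : R -> R) a b c d : (forall t, continuous f t) -> (forall t, 0 <= f t) ->
  a <= c <= d -> d <= b -> RInt f c d <= RInt f a b.
Proof.
  intros Hc Hpos Hacd Hdb.
  assert (Hint : forall x y, ex_RInt f x y) by (intros; apply ex_RInt_continuous_R, Hc).
  rewrite <- (RInt_Chasles f a c b), <- (RInt_Chasles f c d b) by auto.
  unfold plus; simpl.
  pose proof (RInt_ge_0 f a c ltac:(lra) (Hint a c) (fun t _ => Hpos t)).
  pose proof (RInt_ge_0 f d b ltac:(lra) (Hint d b) (fun t _ => Hpos t)). lra.
Qed.

Definition is_RInt_sym (f : R -> R) (I : R) : Prop :=
  Un_cv (fun n => RInt f (- INR n) (INR n)) I.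

Lemma is_RInt_sym_ext f g I : (forall t, f t = g t) -> is_RInt_sym f I -> is_RInt_sym g I.
Proof.
  intros Hfg. apply Un_cv_ext. intros n. apply RInt_ext. intros t _. apply Hfg.
Qed.

Lemma is_RInt_sym_lincomb f1 f2 k1 k2 I1 I2 :
  (forall t, continuous f1 t) -> (forall t, continuous f2 t) ->
  is_RInt_sym f1 I1 -> is_RInt_sym f2 I2 ->
  is_RInt_sym (fun t => k1 * f1 t + k2 * f2 t) (k1 * I1 + k2 * I2).
Proof.
  intros Hc1 Hc2 H1 H2.
  apply (Un_cv_ext (fun n => k1 * RInt f1 (- INR n) (INR n) + k2 * RInt f2 (- INR n) (INR n))).
  - intros n. symmetry.
    rewrite (RInt_plus (V := R_CompleteNormedModule) (fun t => k1 * f1 t) (fun t => k2 * f2 t));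
      try apply (ex_RInt_scal (V := R_NormedModule)); try apply ex_RInt_continuous_R; auto.
    rewrite !(RInt_scal (V := R_CompleteNormedModule)); try apply ex_RInt_continuous_R; auto.
  - apply CV_plus; apply CV_mult; auto; apply Un_cv_const.
Qed.

Section Dominated.

Variable f : R -> R.
Hypothesis f_cont : forall t, continuous f t.
Hypothesis f_dom : forall t, Rabs (f t) <= / (1 + t ^ 2).

Let f_int a b : ex_RInt f a b := ex_RInt_continuous_R f a b f_cont.

Let Rabs_RInt_le a b : a <= b -> Rabs (RInt f a b) <= atan b - atan a.
Proof.
  intros Hab. rewrite <- (is_RInt_unique _ _ _ _ (is_RInt_inv_1_sqr a b)).
  eapply Rle_trans; [apply abs_RInt_le; auto|].
  apply RInt_le; [exact Hab | apply ex_RInt_norm, f_int | eexists; apply is_RInt_inv_1_sqr |].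
  intros t _. apply f_dom.
Qed.

Lemma RInt_sym_tail a b M : a <= - M -> 0 <= M -> M <= b ->
  Rabs (RInt f a b - RInt f (- M) M) <= PI - 2 * atan M.
Proof.
  intros Ha HM Hb.
  assert (Hsplit : RInt f a b = RInt f a (- M) + RInt f (- M) M + RInt f M b).
  { rewrite <- (RInt_Chasles f a (- M) b), <- (RInt_Chasles f (- M) M b) by auto.
    unfold plus; simpl. ring. }
  rewrite Hsplit.
  replace (RInt f a (- M) + RInt f (- M) M + RInt f M b - RInt f (- M) M)
    with (RInt f a (- M) + RInt f M b) by ring.
  eapply Rle_trans; [apply Rabs_triang|].
  pose proof (Rabs_RInt_le a (- M) Ha). pose proof (Rabs_RInt_le M b Hb).
  rewrite atan_opp in *. pose proof (atan_bound a). pose proof (atan_bound b). lra.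
Qed.

Lemma is_RInt_sym_ex : { I | is_RInt_sym f I }.
Proof.
  apply Rcomplete.R_complete. intros e He.
  destruct (atan_tail (e / 4)) as [M [HM HMtail]]; [lra|].
  destruct (INR_eventually_ge M) as [N HN]. exists N. intros n m Hn Hm.
  specialize (HMtail (INR N) (HN N (le_n N))).
  pose proof (HN n Hn). pose proof (HN m Hm). pose proof (HN N (le_n N)).
  pose proof (RInt_sym_tail (- INR n) (INR n) (INR N) ltac:(apply le_INR in Hn; lra) (pos_INR N)
                ltac:(apply le_INR in Hn; lra)).
  pose proof (RInt_sym_tail (- INR m) (INR m) (INR N) ltac:(apply le_INR in Hm; lra) (pos_INR N)
                ltac:(apply le_INR in Hm; lra)).
  eapply Rle_lt_trans; [apply (Rdist_tri _ _ (RInt f (- INR N) (INR N)))|].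
  unfold Rdist. rewrite (Rabs_minus_sym (RInt f (- INR N) (INR N))). lra.
Qed.

Lemma is_RInt_sym_approx I M : is_RInt_sym f I -> 0 <= M ->
  Rabs (RInt f (- M) M - I) <= PI - 2 * atan M.
Proof.
  intros HI HM. destruct (INR_eventually_ge M) as [N HN].
  rewrite Rabs_minus_sym. apply (Un_cv_abs_sub_le _ I _ _ N HI).
  intros n Hn. specialize (HN n Hn). apply RInt_sym_tail; lra.
Qed.

Lemma improper_integral_R_sym I : is_RInt_sym f I -> improper_integral_R f I.
Proof.
  intros HI. split.
  - intros a b. constructor. apply ex_RInt_Reals_0, f_int.
  - intros e He. destruct (atan_tail (e / 4)) as [M [HM HMtail]]; [lra|].
    specialize (HMtail M (Rle_refl M)).
    exists M. intros a b Ha Hb. exists (ex_RInt_Reals_0 _ _ _ (f_int a b)).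
    rewrite <- RInt_Reals.
    pose proof (RInt_sym_tail a b M Ha (Rlt_le _ _ HM) Hb).
    pose proof (is_RInt_sym_approx I M HI (Rlt_le _ _ HM)).
    eapply Rle_lt_trans; [apply (Rdist_tri _ _ (RInt f (- M) M))|]. unfold Rdist. lra.
Qed.

End Dominated.

Lemma is_RInt_sym_close f g I J M d :
  (forall t, continuous f t) -> (forall t, Rabs (f t) <= / (1 + t ^ 2)) ->
  (forall t, continuous g t) -> (forall t, Rabs (g t) <= / (1 + t ^ 2)) ->
  is_RInt_sym f I -> is_RInt_sym g J -> 0 <= M ->
  (forall t, - M <= t <= M -> Rabs (f t - g t) <= d) ->
  Rabs (I - J) <= 2 * (PI - 2 * atan M) + 2 * M * d.
Proof.
  intros Hfc Hfd Hgc Hgd HI HJ HM Hfg.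
  pose proof (is_RInt_sym_approx f Hfc Hfd I M HI HM).
  pose proof (is_RInt_sym_approx g Hgc Hgd J M HJ HM).
  assert (Rabs (RInt f (- M) M - RInt g (- M) M) <= 2 * M * d).
  { rewrite <- (RInt_minus (V := R_CompleteNormedModule)) by (apply ex_RInt_continuous_R; auto).
    replace (2 * M * d) with ((M - - M) * d) by ring.
    apply abs_RInt_le_const; [lra | |exact Hfg].
    apply (ex_RInt_minus (V := R_NormedModule)); apply ex_RInt_continuous_R; auto. }
  replace (I - J) with (- (RInt f (- M) M - I) + (RInt f (- M) M - RInt g (- M) M)
                        + (RInt g (- M) M - J)) by ring.
  eapply Rle_trans; [apply Rabs_triang|]. eapply Rle_trans; [apply Rplus_le_compat_r, Rabs_triang|].
  rewrite Rabs_Ropp. lra.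
Qed.

Lemma is_RInt_sym_exp_cf c : 0 < c -> is_RInt_sym (fun t => Re (exp_cf c t)) (c * PI).
Proof.
  intros Hc.
  assert (Hprim : forall a b, is_RInt (fun t => Re (exp_cf c t)) a b
                               (c * atan (b / c) - c * atan (a / c))).
  { intros a b. apply (is_RInt_derive (V := R_CompleteNormedModule) (fun t => c * atan (t / c))).
    - intros t _.
      replace (Re (exp_cf c t)) with (c * (/ c * / (1 + (t / c)²))).
      2:{ unfold exp_cf, Re, Rsqr; cbn [fst]. field. split; [nra | lra]. }
      apply (is_derive_scal (fun t => atan (t / c))).
      apply (is_derive_comp atan (fun t => t / c)); [apply is_derive_atan|].
      auto_derive; [exact I | field; lra].
    - intros t _. apply continuous_Re, continuous_exp_cf, Hc. }
  apply (Un_cv_ext (fun n => 2 * c * atan (INR n / c))).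
  { intros n. rewrite (is_RInt_unique _ _ _ _ (Hprim _ _)).
    replace (- INR n / c) with (- (INR n / c)) by (field; lra). rewrite atan_opp. ring. }
  intros e He. destruct (atan_tail (e / (2 * c))) as [M [HM HMtail]].
  { apply Rdiv_lt_0_compat; lra. }
  destruct (INR_eventually_ge (M * c)) as [N HN]. exists N. intros n Hn.
  assert (Hn' : M <= INR n / c).
  { apply Rcomplements.Rle_div_r; [lra | apply HN, Hn]. }
  specialize (HMtail _ Hn'). pose proof (atan_bound (INR n / c)).
  unfold Rdist. rewrite Rabs_left by nra.
  apply Rcomplements.Rlt_div_r in HMtail; [|lra]. nra.
Qed.

(* [2 pi] times the density at 0 of a sum of independent exponential variables with distinct rates:
   [c / 2] (the mean of the one-sided limits) for a single one of rate [c], [0] for two or more. *)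
Lemma is_RInt_sym_cf_prod c l :
  Forall (fun c => 0 < c) (c :: l) -> NoDup (c :: l) ->
  is_RInt_sym (fun t => Re (cf_prod (c :: l) t)) (match l with nil => c * PI | _ => 0 end).
Proof.
  revert c. induction l as [|d r IH]; intros c Hpos Hnd.
  - apply (is_RInt_sym_ext (fun t => Re (exp_cf c t))).
    { intros t. cbn [cf_prod]. now rewrite Cmult_1_r. }
    apply is_RInt_sym_exp_cf. now inversion Hpos.
  - inversion Hpos as [|? ? Hc Hpos']; subst. inversion Hpos' as [|? ? Hd Hr]; subst.
    inversion Hnd as [|? ? Hcnot Hnd']; subst. inversion Hnd' as [|? ? Hdnot Hr']; subst.
    assert (Hcd : c <> d) by (intros ->; apply Hcnot; left; reflexivity).
    assert (Hcr : ~ In c r) by (intros Hin; apply Hcnot; right; exact Hin).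
    set (k1 := d / (d - c)). set (k2 := - c / (d - c)).
    set (L := fun c => match r with nil => c * PI | _ => 0 end).
    replace 0 with (k1 * L c + k2 * L d)
      by (unfold k1, k2, L; destruct r; field; intros Hdc; apply Hcd; lra).
    apply (is_RInt_sym_ext (fun t => k1 * Re (cf_prod (c :: r) t) + k2 * Re (cf_prod (d :: r) t))).
    + intros t. change (cf_prod (c :: d :: r) t) with (exp_cf c t * (exp_cf d t * cf_prod r t))%C.
      rewrite Cmult_assoc, exp_cf_mul_partial_fraction by assumption. cbn [cf_prod].
      destruct (exp_cf c t) as [x1 y1], (exp_cf d t) as [x2 y2], (cf_prod r t) as [x3 y3].
      unfold k1, k2, Re, Cmult, Cminus, Cplus, Copp, RtoC; cbn [fst snd].
      field. intros Hdc; apply Hcd; lra.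
    + apply is_RInt_sym_lincomb.
      * intros t. apply continuous_Re, continuous_cf_prod. now constructor.
      * intros t. apply continuous_Re, continuous_cf_prod. now constructor.
      * apply IH; [now constructor | now constructor].
      * apply IH; [now constructor | now constructor].
Qed.

Lemma npow_pos n a : 0 < npow n a.
Proof. apply exp_pos. Qed.

Lemma npow_1 a : npow 1 a = 1.
Proof. unfold npow, Rpower. simpl. rewrite ln_1, Rmult_0_r. apply exp_0. Qed.

Lemma npow_lt a k n : 0 < a -> (1 <= k < n)%nat -> npow k a < npow n a.
Proof.
  intros Ha Hkn. apply Rlt_Rpower_l; [exact Ha|]. split.
  - apply lt_0_INR. lia.
  - apply lt_INR. lia.
Qed.

Lemma npow_double n a : npow n (2 * a) = npow n a ^ 2.
Proof. unfold npow. replace (2 * a) with (a + a) by ring. rewrite Rpower_plus. ring. Qed.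

Fixpoint rates (alpha : R) (n : nat) : list R :=
  match n with
  | O => nil
  | S m => npow (S m) alpha :: rates alpha m
  end.

Lemma rates_pos alpha n : Forall (fun c => 0 < c) (rates alpha n).
Proof. induction n; constructor; auto using npow_pos. Qed.

Lemma In_rates alpha n c : In c (rates alpha n) -> exists k, (1 <= k <= n)%nat /\ c = npow k alpha.
Proof.
  induction n as [|n IH]; [intros []|]. intros [<- | Hin].
  - exists (S n). split; [lia | reflexivity].
  - destruct (IH Hin) as [k [Hk ->]]. exists k. split; [lia | reflexivity].
Qed.

Lemma rates_NoDup alpha n : 0 < alpha -> NoDup (rates alpha n).
Proof.
  intros Ha. induction n as [|n IH]; constructor; [|exact IH].
  intros Hin. destruct (In_rates alpha n _ Hin) as [k [Hk Heq]].
  pose proof (npow_lt alpha k (S n) Ha ltac:(lia)). lra.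
Qed.

Lemma In_1_rates alpha n : (1 <= n)%nat -> In 1 (rates alpha n).
Proof.
  induction n as [|[|n] IH]; intros Hn; [lia | |].
  - left. apply npow_1.
  - right. apply IH. lia.
Qed.

Definition gap_cf (alpha : R) (i j : nat) (t : R) : C :=
  (cf_prod (rates alpha i) t * cf_prod (rates alpha j) (- t))%C.

Definition inv_pow_sum (alpha : R) (i j : nat) : R := / npow i alpha + / npow j alpha.

Lemma inv_pow_sum_pos alpha i j : 0 < inv_pow_sum alpha i j.
Proof.
  pose proof (Rinv_0_lt_compat _ (npow_pos i alpha)).
  pose proof (Rinv_0_lt_compat _ (npow_pos j alpha)). unfold inv_pow_sum. lra.
Qed.

Fixpoint zeta_sum (alpha : R) (n : nat) : R :=
  match n with
  | O => 0
  | S m => zeta_sum alpha m + / npow (S m) alpha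
  end.

Section GapCf.

Variable alpha : R.

Lemma gap_cf_diag m t : gap_cf alpha m m t = RtoC (partial_prod alpha t m).
Proof.
  unfold gap_cf. induction m as [|m IH]; cbn [rates cf_prod partial_prod].
  - now rewrite Cmult_1_l.
  - set (c := npow (S m) alpha).
    transitivity ((exp_cf c t * exp_cf c (- t)) * (cf_prod (rates alpha m) t * cf_prod (rates alpha m) (- t)))%C.
    { ring. }
    rewrite IH, exp_cf_mul_opp by apply npow_pos. rewrite npow_double, <- RtoC_mult. unfold c. f_equal. ring.
Qed.

Lemma Re_gap_cf_0l j t : Re (gap_cf alpha 0 j t) = Re (cf_prod (rates alpha j) t).
Proof. unfold gap_cf. cbn [rates cf_prod]. rewrite Cmult_1_l, cf_prod_opp by apply rates_pos. apply re_conj. Qed.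

Lemma Re_gap_cf_r0 i t : Re (gap_cf alpha i 0 t) = Re (cf_prod (rates alpha i) t).
Proof. unfold gap_cf. cbn [rates cf_prod]. now rewrite Cmult_1_r. Qed.

Lemma Re_gap_cf_rec i j t :
  inv_pow_sum alpha (S i) (S j) * Re (gap_cf alpha (S i) (S j) t) =
  / npow (S j) alpha * Re (gap_cf alpha i (S j) t) + / npow (S i) alpha * Re (gap_cf alpha (S i) j t).
Proof.
  rewrite <- !re_scal_l, <- re_plus. f_equal. unfold gap_cf, inv_pow_sum. cbn [rates cf_prod].
  set (a := npow (S i) alpha). set (b := npow (S j) alpha).
  set (P := cf_prod (rates alpha i) t). set (Q := cf_prod (rates alpha j) (- t)).
  transitivity ((RtoC (/ a + / b) * (exp_cf a t * exp_cf b (- t))) * (P * Q))%C; [ring|].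
  rewrite exp_cf_mul_opp_partial_fraction by apply npow_pos. ring.
Qed.

Lemma Cmod_gap_cf_le i j t : (1 <= i)%nat -> (1 <= j)%nat -> Cmod (gap_cf alpha i j t) <= / (1 + t ^ 2).
Proof.
  intros Hi Hj. unfold gap_cf. rewrite Cmod_mult.
  replace (/ (1 + t ^ 2)) with (Cmod (exp_cf 1 t) * Cmod (exp_cf 1 (- t))).
  2:{ pose proof (pow2_ge_0 t). rewrite <- Cmod_mult, exp_cf_mul_opp by lra.
      rewrite Cmod_R, Rabs_pos_eq; [field; lra | apply Rdiv_le_0_compat; lra]. }
  apply Rmult_le_compat; try apply Cmod_ge_0; apply Cmod_cf_prod_le_In;
    auto using rates_pos, In_1_rates.
Qed.

Lemma Cmod_cf_prod_rates_sub m i t : (m <= i)%nat ->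
  Cmod (cf_prod (rates alpha i) t - cf_prod (rates alpha m) t)
  <= Rabs t * (zeta_sum alpha i - zeta_sum alpha m).
Proof.
  induction 1 as [|i Hmi IH].
  - replace (cf_prod (rates alpha m) t - cf_prod (rates alpha m) t)%C with (RtoC 0) by ring.
    rewrite Rminus_diag, Rmult_0_r, Cmod_0. lra.
  - cbn [rates cf_prod zeta_sum]. set (c := npow (S i) alpha). set (P := cf_prod (rates alpha i) t).
    replace (exp_cf c t * P - cf_prod (rates alpha m) t)%C
      with (P - cf_prod (rates alpha m) t + (exp_cf c t - 1) * P)%C by ring.
    eapply Rle_trans; [apply Cmod_triangle|]. rewrite Cmod_mult.
    assert (Cmod (exp_cf c t - 1) * Cmod P <= Rabs t / c * 1).
    { apply Rmult_le_compat; try apply Cmod_ge_0.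
      - apply Cmod_exp_cf_sub1, npow_pos.
      - apply Cmod_cf_prod_le1, rates_pos. }
    fold P in IH. unfold Rdiv in *. lra.
Qed.

Lemma Cmod_gap_cf_sub_diag m i j t : (m <= i)%nat -> (m <= j)%nat ->
  Cmod (gap_cf alpha i j t - gap_cf alpha m m t)
  <= Rabs t * ((zeta_sum alpha i - zeta_sum alpha m) + (zeta_sum alpha j - zeta_sum alpha m)).
Proof.
  intros Hi Hj. unfold gap_cf.
  pose proof (Cmod_cf_prod_rates_sub m i t Hi) as HP.
  pose proof (Cmod_cf_prod_rates_sub m j (- t) Hj) as HQ. rewrite Rabs_Ropp in HQ.
  pose proof (Cmod_cf_prod_le1 _ (- t) (rates_pos alpha j)).
  pose proof (Cmod_cf_prod_le1 _ t (rates_pos alpha m)).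
  set (Pi := cf_prod (rates alpha i) t) in *. set (Pm := cf_prod (rates alpha m) t) in *.
  set (Qj := cf_prod (rates alpha j) (- t)) in *. set (Qm := cf_prod (rates alpha m) (- t)) in *.
  replace (Pi * Qj - Pm * Qm)%C with ((Pi - Pm) * Qj + Pm * (Qj - Qm))%C by ring.
  eapply Rle_trans; [apply Cmod_triangle|]. rewrite !Cmod_mult.
  pose proof (Cmod_ge_0 (Pi - Pm)). pose proof (Cmod_ge_0 (Qj - Qm)).
  pose proof (Cmod_ge_0 Qj). pose proof (Cmod_ge_0 Pm). nra.
Qed.

Lemma continuous_Re_gap_cf i j t : continuous (fun t => Re (gap_cf alpha i j t)) t.
Proof.
  apply continuous_Re, continuous_Cmult; [apply continuous_cf_prod, rates_pos|].
  apply (continuous_comp (fun t => - t) (cf_prod (rates alpha j))).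
  - apply (continuous_opp (V := R_NormedModule) (fun t => t)), continuous_id.
  - apply continuous_cf_prod, rates_pos.
Qed.

End GapCf.

Section BingoFormula.

Variable alpha : R.
Hypothesis alpha_pos : 0 < alpha.

Lemma pstepX_eq i j : pstepX alpha i j = / (npow j alpha * inv_pow_sum alpha i j).
Proof.
  unfold pstepX, inv_pow_sum. pose proof (npow_pos i alpha). pose proof (npow_pos j alpha).
  field. split; lra.
Qed.

Lemma pstepY_eq i j : pstepY alpha i j = / (npow i alpha * inv_pow_sum alpha i j).
Proof.
  unfold pstepY, inv_pow_sum. pose proof (npow_pos i alpha). pose proof (npow_pos j alpha).
  field. split; lra.
Qed.

Lemma bingo_rec i j : (0 < i + j)%nat ->
  bingo alpha (S i) (S j)
  = bingo alpha i (S j) * pstepX alpha i (S j) + bingo alpha (S i) j * pstepY alpha (S i) j.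
Proof. intros Hij. destruct i, j; [lia | reflexivity ..]. Qed.

Lemma is_RInt_sym_gap_cf_rec i j L1 L2 :
  is_RInt_sym (fun t => Re (gap_cf alpha i (S j) t)) L1 ->
  is_RInt_sym (fun t => Re (gap_cf alpha (S i) j t)) L2 ->
  is_RInt_sym (fun t => Re (gap_cf alpha (S i) (S j) t))
    (/ (npow (S j) alpha * inv_pow_sum alpha (S i) (S j)) * L1
     + / (npow (S i) alpha * inv_pow_sum alpha (S i) (S j)) * L2).
Proof.
  intros H1 H2. pose proof (inv_pow_sum_pos alpha (S i) (S j)).
  pose proof (npow_pos (S i) alpha). pose proof (npow_pos (S j) alpha).
  eapply is_RInt_sym_ext; [| apply is_RInt_sym_lincomb; eauto using continuous_Re_gap_cf].
  intros t. apply (Rmult_eq_reg_l (inv_pow_sum alpha (S i) (S j))); [| lra].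
  rewrite Re_gap_cf_rec. field. lra.
Qed.

Lemma is_RInt_sym_rates j : (2 <= j)%nat -> is_RInt_sym (fun t => Re (cf_prod (rates alpha j) t)) 0.
Proof.
  destruct j as [|[|j]]; intros Hj; [lia | lia |].
  exact (is_RInt_sym_cf_prod _ _ (rates_pos alpha (S (S j))) (rates_NoDup alpha (S (S j)) alpha_pos)).
Qed.

Lemma is_RInt_sym_gap_cf_11 : is_RInt_sym (fun t => Re (gap_cf alpha 1 1 t)) PI.
Proof.
  rewrite <- (Rmult_1_l PI).
  eapply is_RInt_sym_ext; [|apply (is_RInt_sym_cf_prod 1 nil); repeat constructor; [lra | intros []]].
  intros t. rewrite gap_cf_diag. cbn [cf_prod partial_prod]. rewrite Cmult_1_r, npow_1.
  unfold exp_cf, Re; simpl. field. nra.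
Qed.

(* Both sides obey the forward recursion of [bingo]; on the boundary both vanish, the integrals
   because a sum of at least two exponential variables has density 0 at 0. *)
Lemma is_RInt_sym_bingo i j : (2 <= i + j)%nat ->
  is_RInt_sym (fun t => Re (gap_cf alpha i j t))
    (2 * PI * (bingo alpha i j / inv_pow_sum alpha i j)).
Proof.
  remember (i + j)%nat as n eqn:Hn. revert i j Hn.
  induction n as [n IH] using Wf_nat.lt_wf_ind. intros i j Hn Hij.
  destruct i as [|i], j as [|j]; [lia | | |].
  - replace (2 * PI * (bingo alpha 0 (S j) / inv_pow_sum alpha 0 (S j))) with 0
      by (simpl; unfold Rdiv; ring).
    eapply is_RInt_sym_ext; [intros t; symmetry; apply Re_gap_cf_0l | apply is_RInt_sym_rates; lia].
  - replace (2 * PI * (bingo alpha (S i) 0 / inv_pow_sum alpha (S i) 0)) with 0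
      by (simpl; unfold Rdiv; ring).
    eapply is_RInt_sym_ext; [intros t; symmetry; apply Re_gap_cf_r0 | apply is_RInt_sym_rates; lia].
  - destruct (Nat.eq_dec (i + j) 0) as [Hij0 | Hij0].
    + assert (i = 0 /\ j = 0)%nat as [-> ->] by lia.
      replace (2 * PI * (bingo alpha 1 1 / inv_pow_sum alpha 1 1)) with PI
        by (unfold inv_pow_sum; rewrite npow_1; simpl; field).
      exact is_RInt_sym_gap_cf_11.
    + pose proof (is_RInt_sym_gap_cf_rec i j _ _ (IH (i + S j)%nat ltac:(lia) i (S j) eq_refl ltac:(lia))
                    (IH (S i + j)%nat ltac:(lia) (S i) j eq_refl ltac:(lia))) as H.
      rewrite bingo_rec, pstepX_eq, pstepY_eq by lia.
      pose proof (inv_pow_sum_pos alpha i (S j)). pose proof (inv_pow_sum_pos alpha (S i) j).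
      pose proof (inv_pow_sum_pos alpha (S i) (S j)).
      pose proof (npow_pos (S i) alpha). pose proof (npow_pos (S j) alpha).
      refine (eq_ind _ (is_RInt_sym _) H _ _). field. repeat split; lra.
Qed.

End BingoFormula.

Lemma zeta_sum_growing alpha : Un_growing (zeta_sum alpha).
Proof. intros n. simpl. pose proof (Rinv_0_lt_compat _ (npow_pos (S n) alpha)). lra. Qed.

Section Zeta.

Variable alpha : R.
Hypothesis alpha_gt1 : 1 < alpha.

(* Mean value theorem for [x ^ (1 - alpha)] on [[n+1, n+2]]: an integral comparison test. *)
Lemma inv_npow_le_telescope n :
  / npow (S (S n)) alpha
  <= (Rpower (INR (S n)) (1 - alpha) - Rpower (INR (S (S n))) (1 - alpha)) / (alpha - 1).
Proof.
  assert (Hn : 0 < INR (S n)) by (apply lt_0_INR; lia).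
  assert (HSn : INR (S (S n)) = INR (S n) + 1) by (rewrite S_INR; ring).
  destruct (MVT_cor2 (fun x => Rpower x (1 - alpha)) (fun x => (1 - alpha) * Rpower x (1 - alpha - 1))
              (INR (S n)) (INR (S (S n)))) as [xi [Hmvt Hxi]]; [lra | |].
  { intros x Hx. apply derivable_pt_lim_power. lra. }
  replace (1 - alpha - 1) with (- alpha) in Hmvt by ring. rewrite Rpower_Ropp in Hmvt.
  assert (Hxi_pos : 0 < Rpower xi alpha) by apply exp_pos.
  replace (Rpower (INR (S n)) (1 - alpha) - Rpower (INR (S (S n))) (1 - alpha))
    with ((alpha - 1) * / Rpower xi alpha) by (rewrite HSn in Hmvt |- *; lra).
  replace ((alpha - 1) * / Rpower xi alpha / (alpha - 1)) with (/ Rpower xi alpha) by (field; lra).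
  apply Rinv_le_contravar; [exact Hxi_pos|]. apply Rle_Rpower_l; lra.
Qed.

Lemma zeta_sum_le_integral n :
  zeta_sum alpha (S n) <= 1 + (1 - Rpower (INR (S n)) (1 - alpha)) / (alpha - 1).
Proof.
  induction n as [|n IH].
  - cbn [zeta_sum]. rewrite npow_1. simpl INR. unfold Rpower. rewrite ln_1, Rmult_0_r, exp_0.
    unfold Rdiv. rewrite Rminus_diag, Rmult_0_l. lra.
  - change (zeta_sum alpha (S (S n))) with (zeta_sum alpha (S n) + / npow (S (S n)) alpha).
    pose proof (inv_npow_le_telescope n). unfold Rdiv in *. lra.
Qed.

Lemma zeta_sum_cv : { l | Un_cv (zeta_sum alpha) l }.
Proof.
  apply growing_cv; [apply zeta_sum_growing|].
  exists (1 + / (alpha - 1)). intros x [[|n] ->]; simpl zeta_sum.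
  - pose proof (Rinv_0_lt_compat (alpha - 1)). lra.
  - eapply Rle_trans; [apply zeta_sum_le_integral|].
    assert (0 < Rpower (INR (S n)) (1 - alpha)) by apply exp_pos.
    assert (0 < / (alpha - 1)) by (apply Rinv_0_lt_compat; lra). unfold Rdiv. nra.
Qed.

End Zeta.

Lemma partial_prod_nonneg alpha t n : 0 <= partial_prod alpha t n.
Proof.
  induction n as [|n IH]; simpl; [lra|]. apply Rmult_le_pos; [exact IH|].
  pose proof (npow_pos (S n) (2 * alpha)). pose proof (pow2_ge_0 t). apply Rdiv_le_0_compat; lra.
Qed.

Lemma partial_prod_cv alpha t : { p | Un_cv (partial_prod alpha t) p }.
Proof.
  apply decreasing_cv.
  - intros n. cbn [partial_prod]. pose proof (partial_prod_nonneg alpha t n).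
    pose proof (npow_pos (S n) (2 * alpha)). pose proof (pow2_ge_0 t).
    assert (npow (S n) (2 * alpha) / (npow (S n) (2 * alpha) + t ^ 2) <= 1)
      by (apply Rcomplements.Rle_div_l; lra).
    nra.
  - exists 0. intros x [n ->]. unfold opp_seq. pose proof (partial_prod_nonneg alpha t n). lra.
Qed.

Section Limit.

Variables (alpha l : R) (F : R -> R).
Hypothesis alpha_gt1 : 1 < alpha.
Hypothesis zeta_cv : Un_cv (zeta_sum alpha) l.
Hypothesis F_lim : forall t, Un_cv (partial_prod alpha t) (F t).

Let zeta_sum_le_lim n : zeta_sum alpha n <= l := growing_ineq _ _ (zeta_sum_growing alpha) zeta_cv n.

Lemma Re_gap_cf_sub_partial_prod m i j t : (m <= i)%nat -> (m <= j)%nat ->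
  Rabs (Re (gap_cf alpha i j t) - partial_prod alpha t m) <= 2 * Rabs t * (l - zeta_sum alpha m).
Proof.
  intros Hi Hj.
  replace (partial_prod alpha t m) with (Re (gap_cf alpha m m t)) by now rewrite gap_cf_diag.
  replace (Re (gap_cf alpha i j t) - Re (gap_cf alpha m m t))
    with (Re (gap_cf alpha i j t - gap_cf alpha m m t)) by (unfold Cminus; rewrite re_plus; reflexivity).
  eapply Rle_trans; [apply re_le_Cmod|].
  eapply Rle_trans; [apply Cmod_gap_cf_sub_diag; eauto|].
  pose proof (zeta_sum_le_lim i). pose proof (zeta_sum_le_lim j). pose proof (Rabs_pos t). nra.
Qed.

Lemma lim_sub_partial_prod m t : Rabs (F t - partial_prod alpha t m) <= 2 * Rabs t * (l - zeta_sum alpha m).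
Proof.
  apply (Un_cv_abs_sub_le _ _ _ _ m (F_lim t)). intros n Hn.
  replace (partial_prod alpha t n) with (Re (gap_cf alpha n n t)) by now rewrite gap_cf_diag.
  now apply Re_gap_cf_sub_partial_prod.
Qed.

Lemma lim_bounds t : 0 <= F t <= / (1 + t ^ 2).
Proof.
  split; [apply (Un_cv_ge_eventually _ _ _ 0 (F_lim t)); intros n _;
          apply partial_prod_nonneg|].
  apply (Un_cv_le_eventually _ _ _ 1 (F_lim t)). intros n Hn.
  replace (partial_prod alpha t n) with (Re (gap_cf alpha n n t)) by now rewrite gap_cf_diag.
  eapply Rle_trans; [apply Rle_abs|]. eapply Rle_trans; [apply re_le_Cmod|].
  now apply Cmod_gap_cf_le.
Qed.

Lemma continuous_lim t : continuous F t.
Proof.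
  apply continuity_pt_filterlim.
  apply (CVU_continuity (fun n t => partial_prod alpha t n) F t (mkposreal 1 Rlt_0_1));
    [| intros n y _; apply continuity_pt_filterlim;
       apply (continuous_ext (fun t => Re (gap_cf alpha n n t)));
       [intros s; now rewrite gap_cf_diag | apply continuous_Re_gap_cf]
    | apply Boule_center].
  intros e He. assert (Ht : 0 < 2 * (Rabs t + 1)) by (pose proof (Rabs_pos t); lra).
  destruct (zeta_cv (e / (2 * (Rabs t + 1)))) as [N HN]; [apply Rdiv_lt_0_compat; lra|].
  exists N. intros n y Hn Hy. unfold Boule in Hy; simpl in Hy.
  specialize (HN n Hn). unfold Rdist in HN. rewrite Rabs_minus_sym, Rabs_pos_eq in HN
    by (pose proof (zeta_sum_le_lim n); lra).
  assert (Hy' : Rabs y <= Rabs t + 1).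
  { replace y with ((y - t) + t) by ring. pose proof (Rabs_triang (y - t) t). lra. }
  eapply Rle_lt_trans; [apply lim_sub_partial_prod|].
  apply Rmult_lt_compat_l with (r := 2 * (Rabs t + 1)) in HN; [|lra].
  replace (2 * (Rabs t + 1) * (e / (2 * (Rabs t + 1)))) with e in HN by (field; lra).
  pose proof (zeta_sum_le_lim n). nra.
Qed.

Lemma is_RInt_sym_lim_pos I : is_RInt_sym F I -> 0 < I.
Proof.
  intros HI. assert (Hl : 0 <= l) by (apply (zeta_sum_le_lim 0)).
  set (d := / (4 * l + 1)).
  assert (Hd : 0 < d <= 1).
  { split; [apply Rinv_0_lt_compat; lra|]. rewrite <- Rinv_1. apply Rinv_le_contravar; lra. }
  assert (Hld : 4 * d * l <= 1).
  { unfold d. replace (4 * / (4 * l + 1) * l) with (4 * l / (4 * l + 1)) by (field; lra).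
    apply Rcomplements.Rle_div_l; lra. }
  assert (HF_near0 : forall t, - d <= t <= d -> 1 / 2 <= F t).
  { intros t Ht. pose proof (lim_sub_partial_prod 0 t) as H. simpl in H.
    rewrite Rminus_0_r in H. apply Rabs_le_between in H.
    assert (Rabs t <= d) by (apply Rabs_le; lra). pose proof (Rabs_pos t). nra. }
  apply Rlt_le_trans with d; [lra|].
  apply (Un_cv_ge_eventually _ _ _ 1 HI). intros n Hn. apply le_INR in Hn. simpl in Hn.
  apply Rle_trans with (RInt F (- d) d).
  - replace d with (RInt (fun _ => 1 / 2) (- d) d) at 1
      by (rewrite RInt_const; unfold scal; simpl; unfold mult; simpl; field).
    apply RInt_le; [lra | apply ex_RInt_const | apply ex_RInt_continuous_R, continuous_lim |].
    intros t Ht. apply HF_near0. lra.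
  - apply RInt_le_superinterval; [apply continuous_lim | apply lim_bounds | lra | lra].
Qed.

Lemma bingo_integral_close I : is_RInt_sym F I ->
  forall eps, 0 < eps -> exists N, forall i j, (N <= i)%nat -> (N <= j)%nat ->
    Rabs (2 * PI * (bingo alpha i j / inv_pow_sum alpha i j) - I) < eps.
Proof.
  intros HI eps Heps.
  destruct (atan_tail (eps / 8)) as [M [HM HMtail]]; [lra|]. specialize (HMtail M (Rle_refl M)).
  destruct (zeta_cv (eps / (16 * M * M))) as [m Hm]; [apply Rdiv_lt_0_compat; nra|].
  specialize (Hm m (le_n m)). unfold Rdist in Hm.
  rewrite Rabs_minus_sym, Rabs_pos_eq in Hm by (pose proof (zeta_sum_le_lim m); lra).
  exists (S m). intros i j Hi Hj.
  eapply Rle_lt_trans.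
  - apply (is_RInt_sym_close (fun t => Re (gap_cf alpha i j t)) F _ I M (4 * M * (l - zeta_sum alpha m)));
      [ apply continuous_Re_gap_cf
      | intros t; eapply Rle_trans; [apply re_le_Cmod | apply Cmod_gap_cf_le; lia]
      | apply continuous_lim
      | intros t; pose proof (lim_bounds t); rewrite Rabs_pos_eq; lra
      | apply is_RInt_sym_bingo; [lra | lia]
      | exact HI | lra | ].
    intros t Ht.
    pose proof (Re_gap_cf_sub_partial_prod m i j t ltac:(lia) ltac:(lia)).
    pose proof (lim_sub_partial_prod m t). pose proof (zeta_sum_le_lim m).
    assert (Rabs t <= M) by (apply Rabs_le; lra).
    replace (Re (gap_cf alpha i j t) - F t)
      with ((Re (gap_cf alpha i j t) - partial_prod alpha t m) - (F t - partial_prod alpha t m)) by ring.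
    eapply Rle_trans; [apply Rabs_triang|]. rewrite Rabs_Ropp. nra.
  - apply Rmult_lt_compat_l with (r := 16 * M * M) in Hm; [|nra].
    replace (16 * M * M * (eps / (16 * M * M))) with eps in Hm by (field; lra). nra.
Qed.

Lemma bingo_asymptotic I : is_RInt_sym F I -> 0 < I ->
  forall eps, 0 < eps -> exists N, forall i j, (N <= i)%nat -> (N <= j)%nat ->
    Rabs (bingo alpha i j / (I / (2 * PI) * (Rpower (INR i) (- alpha) + Rpower (INR j) (- alpha))) - 1)
      < eps.
Proof.
  intros HI HIpos eps Heps.
  destruct (bingo_integral_close I HI (eps * I)) as [N HN]; [nra|].
  exists N. intros i j Hi Hj. specialize (HN i j Hi Hj).
  rewrite !Rpower_Ropp. fold (npow i alpha) (npow j alpha) (inv_pow_sum alpha i j).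
  pose proof (inv_pow_sum_pos alpha i j). pose proof PI_RGT_0.
  replace (bingo alpha i j / (I / (2 * PI) * inv_pow_sum alpha i j) - 1)
    with ((2 * PI * (bingo alpha i j / inv_pow_sum alpha i j) - I) / I) by (field; lra).
  rewrite Rabs_div, (Rabs_pos_eq I) by lra. apply Rcomplements.Rlt_div_l; lra.
Qed.

End Limit.

Theorem theoremt3 (alpha : R) (halpha : 1 < alpha) :
  exists (F : R -> R) (I : R),
    (forall t, Un_cv (partial_prod alpha t) (F t)) /\
    improper_integral_R F I /\
    0 < I /\
    (let beta := I / (2 * PI) in
     (forall eps, 0 < eps -> exists N : nat, forall i j : nat,
        (N <= i)%nat -> (N <= j)%nat ->
        Rabs (bingo alpha i j /
              (beta * (Rpower (INR i) (- alpha) + Rpower (INR j) (- alpha))) - 1)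
          < eps) /\
     (forall eps, 0 < eps -> exists N : nat, forall n : nat,
        (N <= n)%nat ->
        Rabs (bingo alpha n n / (2 * beta * Rpower (INR n) (- alpha)) - 1) < eps)).
Proof.
  destruct (zeta_sum_cv alpha halpha) as [l Hl].
  set (F t := proj1_sig (partial_prod_cv alpha t)).
  assert (HF : forall t, Un_cv (partial_prod alpha t) (F t)) by (intros t; apply proj2_sig).
  assert (HFdom : forall t, Rabs (F t) <= / (1 + t ^ 2)).
  { intros t. pose proof (lim_bounds alpha F HF t). rewrite Rabs_pos_eq; lra. }
  pose proof (continuous_lim alpha l F Hl HF) as HFcont.
  destruct (is_RInt_sym_ex F HFcont HFdom) as [I HI].
  pose proof (is_RInt_sym_lim_pos alpha l F Hl HF I HI) as HIpos.
  pose proof (bingo_asymptotic alpha l F halpha Hl HF I HI HIpos) as Hasym.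
  exists F, I. split; [exact HF|]. split; [exact (improper_integral_R_sym F HFcont HFdom I HI)|].
  split; [exact HIpos|]. intros beta. split; [exact Hasym|].
  intros eps Heps. destruct (Hasym eps Heps) as [N HN]. exists N. intros n Hn.
  replace (2 * beta * Rpower (INR n) (- alpha))
    with (beta * (Rpower (INR n) (- alpha) + Rpower (INR n) (- alpha))) by ring.
  exact (HN n n Hn Hn).
Qed.
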